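(* Let $G=(K\cup I,E)$ be a split graph and let $(V,\mathcal{F})$ be the split graph vertex shelling antimatroid defined on $G$. Then a subset $F\subseteq V$ is feasible (i.e. $F\in\mathcal{F}$) if and only if $N(F)$ induces a clique in $G$.
   Context: A split graph $G=(K\cup I,E)$ is a finite simple graph whose vertex set $V=K\cup I$ comes with a fixed partition into a clique $K$ and an independent set $I$ (either may be empty). We write $u\sim v$ if $u,v$ are adjacent. For $F\subseteq V$, $N(F)$ denotes the set of vertices $w\in V\setminus F$ adjacent to at least one vertex of $F$, and $N(v)=N(\{v\})$. A vertex is simplicial in a graph if its neighbours induce a clique. The split graph vertex shelling antimatroid of $G$ is the set system $(V,\mathcal{F})$ in which $F\subseteq V$ is feasible iff there is an ordering $f_1,\dots,f_{|F|}$ of $F$ such that for every $j$, $f_j$ is simplicial in the graph obtained from $G$ by deleting $f_1,\dots,f_{j-1}$ (the empty set is feasible). The empty vertex set counts as a clique. *)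

From mathcomp Require Import all_boot.
Set Implicit Arguments. Unset Strict Implicit. Unset Printing Implicit Defensive.

Definition simple_graph (T : finType) (e : rel T) : Prop :=
  symmetric e /\ irreflexive e.

Definition is_clique (T : finType) (e : rel T) (S : {set T}) : Prop :=
  forall u v, u \in S -> v \in S -> u != v -> e u v.

Definition is_independent (T : finType) (e : rel T) (S : {set T}) : Prop :=
  forall u v, u \in S -> v \in S -> ~~ e u v.

(* Split graph with fixed partition V = K ∪ I (I is the complement of K). *)
Definition split_graph (T : finType) (e : rel T) (K : {set T}) : Prop :=
  [/\ simple_graph e, is_clique e K & is_independent e (~: K)].

Definition nbhd (T : finType) (e : rel T) (F : {set T}) : {set T} :=
  [set w | (w \notin F) && [exists f in F, e f w]].

(* v is simplicial in the graph G - D (induced subgraph on ~: D), v \notin D: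
   its neighbours in G - D induce a clique. *)
Definition simplicial_in (T : finType) (e : rel T) (D : {set T}) (v : T) : Prop :=
  is_clique e [set w | (w \notin D) && e v w].

Fixpoint shelling_seq (T : finType) (e : rel T) (D : {set T}) (s : seq T) : Prop :=
  match s with
  | [::] => True
  | v :: s' => v \notin D /\ simplicial_in e D v /\ shelling_seq e (v |: D) s'
  end.

Definition feasible (T : finType) (e : rel T) (F : {set T}) : Prop :=
  exists s : seq T, [/\ uniq s, [set x in s] = F & shelling_seq e set0 s].

From mathcomp Require Import all_boot.
Set Implicit Arguments. Unset Strict Implicit. Unset Printing Implicit Defensive.

(* Adding to F a vertex v that is
   simplicial in G - F keeps N(F) a clique: the only new adjacencies needed
   are between a vertex of N(F) and a neighbour of v outside F ∪ N(F), and
   the clique/independent-set partition rules out every way for such a pair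
   to be non-adjacent.  Conversely, if N(F) is a clique and F is nonempty,
   some v ∈ F either has no neighbour in F or dominates N(F) (a clique vertex
   of F adjacent to N(F) ∩ I, or any vertex when F ⊆ I); removing it keeps
   N(F \ v) a clique, and v is simplicial in G - (F \ v) because its
   neighbours there lie in N(F). *)

Section SimpleGraph.

Variables (T : finType) (e : rel T).
Hypotheses (e_sym : symmetric e) (e_irr : irreflexive e).

Lemma set_rcons (s : seq T) x : [set y in rcons s x] = x |: [set y in s].
Proof. by apply/setP => y; rewrite !inE mem_rcons inE. Qed.

Lemma shelling_seq_rcons (D : {set T}) (s : seq T) v :
  shelling_seq e D (rcons s v) <->
  [/\ shelling_seq e D s, v \notin D :|: [set x in s] &
      simplicial_in e (D :|: [set x in s]) v].
Proof.
elim: s D => [|x s IHs] D /=; first by rewrite set_nil setU0; firstorder.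
rewrite (set_cons x s) setUCA setUA setUC; split.
  by case=> xD [xS /IHs[]].
by case=> -[xD [xS sh]] vD vS; do 2!split=> //; apply/IHs.
Qed.

Lemma feasible_setU1 (D : {set T}) v :
  feasible e D -> v \notin D -> simplicial_in e D v -> feasible e (v |: D).
Proof.
case=> s [s_uniq sD sh] vD vS; exists (rcons s v).
rewrite rcons_uniq -sD set_rcons s_uniq andbT; split=> //.
  by move: vD; rewrite -sD inE.
by apply/shelling_seq_rcons; rewrite set0U sD.
Qed.

Lemma nbhd_set0 : nbhd e set0 = set0.
Proof.
by apply/setP => w; rewrite !inE; apply/existsP => -[f]; rewrite inE.
Qed.

Lemma nbhdP (F : {set T}) w :
  reflect (w \notin F /\ exists2 f, f \in F & e f w) (w \in nbhd e F).
Proof.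
rewrite inE; apply: (iffP andP) => -[wF fw]; split=> //.
  by case/existsP: fw => f /andP[]; exists f.
by case: fw => f fF fw; apply/existsP; exists f; rewrite fF.
Qed.

Lemma nbhd_setD1 (F : {set T}) v w :
  w \in nbhd e (F :\ v) -> w != v -> w \in nbhd e F.
Proof.
case/nbhdP; rewrite in_setD1 negb_and negbK => wF [f /setD1P[_ fF] fw] wv.
apply/nbhdP; split; last by exists f.
by move: wF; rewrite (negbTE wv).
Qed.

Lemma simplicial_setD1 (F : {set T}) v :
  v \in F -> is_clique e (nbhd e F) -> simplicial_in e (F :\ v) v.
Proof.
move=> vF cN a b; rewrite !inE => /andP[aF va] /andP[bF vb] ab.
have nbr_in x : ~~ ((x != v) && (x \in F)) -> e v x -> x \in nbhd e F.
  move=> xF vx; have xv : x != v by apply: contraTneq vx => ->; rewrite e_irr.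
  by apply/nbhdP; split; [rewrite xv in xF | exists v].
by apply: cN => //; apply: nbr_in.
Qed.

Definition removable (F : {set T}) v :=
  (forall f, f \in F -> ~~ e f v) \/ (forall w, w \in nbhd e F -> e v w).

Lemma nbhd_setD1_clique (F : {set T}) v :
  v \in F -> removable F v -> is_clique e (nbhd e F) ->
  is_clique e (nbhd e (F :\ v)).
Proof.
move=> vF vR cN a b aN bN ab.
have dom : v \in nbhd e (F :\ v) -> forall w, w \in nbhd e F -> e v w.
  case: vR => [isol|//] /nbhdP[_ [f /setD1P[_ fF] fv]].
  by have := isol f fF; rewrite fv.
case: (eqVneq a v) => [av|av]; case: (eqVneq b v) => [bv|bv].
- by rewrite av bv eqxx in ab.
- by rewrite av in aN *; exact: dom aN b (nbhd_setD1 bN bv).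
- by rewrite bv e_sym in bN *; exact: dom bN a (nbhd_setD1 aN av).
- by apply: cN (nbhd_setD1 aN av) (nbhd_setD1 bN bv) ab.
Qed.

End SimpleGraph.

Arguments nbhdP {T e F w}.

Section SplitGraph.

Variables (T : finType) (e : rel T) (K : {set T}).
Hypothesis splitG : split_graph e K.

Let e_sym : symmetric e. Proof. by case: splitG => -[]. Qed.
Let e_irr : irreflexive e. Proof. by case: splitG => -[]. Qed.
Let cliqueK : is_clique e K. Proof. by case: splitG. Qed.

Lemma split_edge_memK u w : e u w -> u \notin K -> w \in K.
Proof.
case: splitG => _ _ indepI uw uK; apply: contraTT uw => wK.
by apply: indepI; rewrite inE.
Qed.

Lemma nbhd_setU1P (F : {set T}) v w :
  w \in nbhd e (v |: F) ->
  (w \in nbhd e F /\ w != v) \/ (w \notin F /\ e v w).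
Proof.
case/nbhdP; rewrite in_setU1 negb_or => /andP[wv wF] [f /setU1P[-> vw|fF fw]].
  by right.
by left; split=> //; apply/nbhdP; split=> //; exists f.
Qed.

Lemma nbhd_simplicial_nbr_adj (F : {set T}) v a b :
  is_clique e (nbhd e F) -> v \notin F -> simplicial_in e F v ->
  a \in nbhd e F -> a != v -> b \notin F -> e v b -> a != b -> e a b.
Proof.
move=> cN vF vS aN av bF vb ab.
have [aF [f fF fa]] := nbhdP aN.
have [va|va] := boolP (e v a); first by apply: vS; rewrite // !inE ?aF ?bF.
have [bN|bN] := boolP (b \in nbhd e F); first exact: cN.
have f_neq x : x \notin F -> f != x by move=> xF; apply: contraNneq xF => <-.
have inN x : x \notin F -> e f x -> x \in nbhd e F.
  by move=> xF fx; apply/nbhdP; split=> //; exists f.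
have [aK|aK] := boolP (a \in K).
  have [bK|bK] := boolP (b \in K); first exact: cliqueK.
  have vK : v \in K by apply: (split_edge_memK _ bK); rewrite e_sym.
  by rewrite e_sym cliqueK // eq_sym in va.
have fK : f \in K by apply: (split_edge_memK _ aK); rewrite e_sym.
have [vK|vK] := boolP (v \in K).
  have vN := inN v vF (cliqueK fK vK (f_neq v vF)).
  by rewrite e_sym cN // in va.
have bK := split_edge_memK vb vK.
by rewrite inN // in bN; apply: cliqueK => //; exact: f_neq.
Qed.

Lemma nbhd_setU1_clique (F : {set T}) v :
  v \notin F -> simplicial_in e F v -> is_clique e (nbhd e F) ->
  is_clique e (nbhd e (v |: F)).
Proof.
move=> vF vS cN a b.
move=> /nbhd_setU1P[[aN av]|[aF va]] /nbhd_setU1P[[bN bv]|[bF vb]] ab.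
- exact: cN.
- exact: nbhd_simplicial_nbr_adj cN vF vS aN av bF vb ab.
- rewrite e_sym; apply: nbhd_simplicial_nbr_adj cN vF vS bN bv aF va _.
  by rewrite eq_sym.
- by apply: vS; rewrite // !inE ?aF ?bF.
Qed.

Lemma feasible_nbhd_clique (F : {set T}) :
  feasible e F -> is_clique e (nbhd e F).
Proof.
case=> s [_ <- sh]; elim/last_ind: s sh => [|s v IHs].
  by rewrite set_nil nbhd_set0 => _ a b; rewrite inE.
case/shelling_seq_rcons; rewrite set0U set_rcons => sh vs vS.
exact: nbhd_setU1_clique (IHs sh).
Qed.

Lemma clique_vertex_dominates (F : {set T}) f :
  f \in F -> f \in K -> (forall w, w \in nbhd e F -> w \notin K -> e f w) ->
  forall w, w \in nbhd e F -> e f w.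
Proof.
move=> fF fK fI w wN; have [wK|] := boolP (w \in K); last exact: fI.
by apply: cliqueK => //; apply: contraTneq wN => <-; rewrite inE fF.
Qed.

Lemma exists_removable (F : {set T}) :
  F != set0 -> is_clique e (nbhd e F) -> exists2 v, v \in F & removable e F v.
Proof.
move=> F0 cN.
case: (pickP [pred w | (w \in nbhd e F) && (w \notin K)]).
  move=> w /andP[wN wK].
  have [wF [f fF fw]] := nbhdP wN.
  have fK : f \in K by apply: (split_edge_memK _ wK); rewrite e_sym.
  exists f => //; right; apply: clique_vertex_dominates => // u uN uK.
  have [->//|uw] := eqVneq u w.
  by have := split_edge_memK (cN u w uN wN uw) uK; rewrite (negbTE wK).
move=> NK.
case: (pickP [pred f | (f \in F) && (f \in K)]) => [f /andP[fF fK]|FI].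
  exists f => //; right; apply: clique_vertex_dominates => // u uN uK.
  by have := NK u; rewrite /= uN uK.
have notK x : x \in F -> x \notin K.
  by move=> xF; apply/negP => xK; have := FI x; rewrite /= xF xK.
case/set0Pn: F0 => v vF; exists v => //; left => f fF.
apply/negP => /split_edge_memK /(_ (notK f fF)).
by rewrite (negbTE (notK v vF)).
Qed.

Lemma nbhd_clique_feasible (F : {set T}) :
  is_clique e (nbhd e F) -> feasible e F.
Proof.
have [n] := ubnP #|F|; elim: n F => // n IHn F; rewrite ltnS => Fn cN.
have [->|F0] := eqVneq F set0; first by exists [::]; rewrite set_nil.
have [v vF vR] := exists_removable F0 cN.
rewrite -(setD1K vF); apply: feasible_setU1.
- apply: IHn; first by rewrite (cardsD1 v) vF add1n in Fn.
  exact: nbhd_setD1_clique.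
- by rewrite setD11.
- exact: simplicial_setD1.
Qed.

End SplitGraph.

Theorem mainTheorem1 (T : finType) (e : rel T) (K : {set T})
  (hG : split_graph e K) (F : {set T}) :
  feasible e F <-> is_clique e (nbhd e F).
Proof.
by split; [apply: (feasible_nbhd_clique hG) | apply: (nbhd_clique_feasible hG)].
Qed.
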